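(* Let $G$ be a finite simple forest on vertex set $\{x_1,\dots,x_n\}$, let $\Bbbk$ be a field and $S=\Bbbk[x_1,\dots,x_n]$. Then for every integer $k$ with $1\leq k\leq \operatorname{mat}(G)$, \[\operatorname{reg}(I(G)^{[k]})\leq \operatorname{aim}(G,k)+k.\]
   Context: $I(G)\subseteq S$ is the edge ideal, generated by $x_ix_j$ for edges $\{x_i,x_j\}$ of $G$. $\operatorname{mat}(G)$ is the matching number (maximum size of a set of pairwise disjoint edges). For $1\le k\le\operatorname{mat}(G)$, the $k$th squarefree power $I(G)^{[k]}$ is the ideal generated by the products $e_1\cdots e_k$ over all matchings $\{e_1,\dots,e_k\}$ of $G$ of size $k$ (an edge $\{x_i,x_j\}$ identified with the monomial $x_ix_j$); it is $(0)$ if $k>\operatorname{mat}(G)$. $\operatorname{reg}$ denotes Castelnuovo–Mumford regularity. Two edges form a gap if they are disjoint and no edge of $G$ joins a vertex of one to a vertex of the other. A sequence $(a_1,\dots,a_n)$ of integers is $k$-admissable if $a_i\ge1$ for all $i$ and $a_1+\dots+a_n\le n+k-1$. For $1\le k\le\operatorname{mat}(G)$, a matching $M$ of $G$ is $k$-admissable if there are nonempty pairwise disjoint subsets $M_1,\dots,M_r$ of $M$ with $M=M_1\cup\dots\cup M_r$ such that: for $i\ne j$, any $e\in M_i$ and $f\in M_j$ form a gap in $G$; the sequence $(|M_1|,\dots,|M_r|)$ is $k$-admissable; and for each $i$ the induced subgraph of $G$ on $\bigcup_{e\in M_i}e$ is a forest. $\operatorname{aim}(G,k)$ is the maximum size of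 a $k$-admissable matching of $G$ (and $0$ if none exists). *)

From HB Require Import structures.
From mathcomp Require Import all_boot all_order all_algebra.
From mathcomp Require Import boolp.
Set Implicit Arguments. Unset Strict Implicit. Unset Printing Implicit Defensive.
Import GRing.Theory.

(* A finite simple graph on vertices x_0..x_{n-1} is a
   symmetric irreflexive relation e : rel 'I_n.  Edges are 2-element vertex sets. *)

Section Graph.
Variables (n : nat) (e : rel 'I_n).

Definition is_edge (f : {set 'I_n}) : bool :=
  [exists x, exists y, e x y && (f == [set x; y])].

Definition matching (M : {set {set 'I_n}}) : bool :=
  [forall f in M, is_edge f] && trivIset M.

Definition mat : nat := \max_(M : {set {set 'I_n}} | matching M) #|M|.

Definition acyclic_on (W : {set 'I_n}) : Prop :=
  ~ exists p : seq 'I_n,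
      [/\ uniq p, 2 < size p, all (fun v => v \in W) p & cycle e p].

Definition forest : Prop := acyclic_on setT.

Definition gap (f g : {set 'I_n}) : bool :=
  [disjoint f & g] && [forall x in f, forall y in g, ~~ e x y].

Definition admissable_seq (k : nat) (s : seq nat) : bool :=
  all (fun a => 0 < a) s && (sumn s <= size s + k - 1).

Definition kadm_matching (k : nat) (M : {set {set 'I_n}}) : Prop :=
  matching M /\
  exists P : {set {set {set 'I_n}}},
    [/\ partition P M,
        (forall B C, B \in P -> C \in P -> B != C ->
           forall f g, f \in B -> g \in C -> gap f g),
        admissable_seq k [seq #|B : {set {set 'I_n}}| | B : {set {set 'I_n}} <- enum P]
      & forall B, B \in P -> acyclic_on (cover B)].

Definition aim (k : nat) : nat :=
  \max_(M : {set {set 'I_n}} | `[< kadm_matching k M >]) #|M|.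

(* A monomial x^b (b : exponent vector) lies in I(G)^[k] iff it is divisible
   by some generator e_1...e_k = prod_{v in cover M} x_v, M a k-matching. *)
Definition mono_in_sqpow (k : nat) (b : {ffun 'I_n -> nat}) : bool :=
  [exists M : {set {set 'I_n}},
     [&& matching M, #|M| == k & [forall v in cover M, 0 < b v]]].

(* ---- multigraded Betti numbers via the Koszul complex ----
   Tor_i^S(I,F)_a = H_i(K(x_0..x_{n-1}) (x)_S I)_a.  In multidegree a the
   i-th chain group has basis e_Fs (x) x^(a - 1_Fs) for Fs with |Fs| = i,
   Fs contained in supp a and x^(a - 1_Fs) in I. *)
Definition subind (a : {ffun 'I_n -> nat}) (Fs : {set 'I_n}) :
  {ffun 'I_n -> nat} := [ffun v => a v - (v \in Fs)].

Definition kvalid (k : nat) (a : {ffun 'I_n -> nat}) (Fs : {set 'I_n}) : bool :=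
  [forall v in Fs, 0 < a v] && mono_in_sqpow k (subind a Fs).

Definition kbasis (k i : nat) (a : {ffun 'I_n -> nat}) : {set {set 'I_n}} :=
  [set Fs : {set 'I_n} | (#|Fs| == i) && kvalid k a Fs].

Variable R : fieldType.

Definition ksign (Fs : {set 'I_n}) (j : 'I_n) : R :=
  (-1) ^+ #|[set u in Fs | (u < j)%N]|.

(* matrix of the Koszul differential d_i : K_i -> K_{i-1} in degree a
   (row-vector convention, rows/cols indexed by all vertex subsets;
   rows/cols outside the bases are zero) *)
Definition kdiff (k i : nat) (a : {ffun 'I_n -> nat}) :
  'M[R]_(#|{: {set 'I_n}}|, #|{: {set 'I_n}}|) :=
  \matrix_(p, q)
    (let Fs : {set 'I_n} := enum_val p in let Gs : {set 'I_n} := enum_val q in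
     if [&& #|Fs| == i, kvalid k a Fs, kvalid k a Gs,
            Gs \subset Fs & #|Fs| == #|Gs|.+1]
     then (if [pick j in Fs :\: Gs] is Some j then ksign Fs j else 0%R)
     else 0%R).

(* beta_{i,a}(I(G)^[k]) over R = dim ker d_i - rank d_{i+1} *)
Definition betti (k i : nat) (a : {ffun 'I_n -> nat}) : nat :=
  #|kbasis k i a| - \rank (kdiff k i a) - \rank (kdiff k i.+1 a).

(* reg(I(G)^[k]) <= r, with reg(I) = max{ |a| - i : beta_{i,a}(I) <> 0 } *)
Definition reg_le (k r : nat) : Prop :=
  forall (i : nat) (a : {ffun 'I_n -> nat}),
    betti k i a != 0%N -> (\sum_v a v <= i + r)%N.

End Graph.

(* The Koszul complex computing Tor(I(G)^[k], k) in a multidegree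
   with some exponent >= 2 is a cone, so only squarefree degrees 1_W matter;
   there it is the complex of the faces F of W such that W \ F still carries
   k disjoint edges.  Deletion and link at a vertex x give
   b_(j+1)(D) <= b_(j+1)(del_x D) + b_j(lk_x D), so regularity bounds pass
   from the smaller complexes to D.  The end v of a longest
   path in the forest G[W] is a leaf whose neighbour u has only leaves as
   neighbours, apart from one vertex p.  Splitting at u, the link is a cone
   with apex v.  In the deletion u survives as a spare vertex, and the
   neighbours of u are split off one by one: the edge they form with u either
   lowers k by one or u becomes useless.  Each time the bound drops, because
   adding that edge to a k-admissible matching gives a larger one, the edge
   forming a new gap block or joining the block through p. *)

From mathcomp Require Import all_boot all_order all_algebra.
From mathcomp Require Import zify ring boolp.

Set Implicit Arguments. Unset Strict Implicit. Unset Printing Implicit Defensive.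
Import GRing.Theory.

(** * Koszul complexes of sets of faces *)

Section KoszulComplex.
Variables (n : nat) (R : fieldType).
Local Notation T := {set 'I_n}.
Local Notation N := #|{: T}|.

Definition koszul_entry (D : pred T) (i : nat) (F G : T) : R :=
  if [&& #|F| == i, D F, D G, G \subset F & #|F| == #|G|.+1]
  then (if [pick j in F :\: G] is Some j then ksign R F j else 0%R) else 0%R.

Definition koszul_mx (D : pred T) (i : nat) : 'M[R]_N :=
  \matrix_(p, q) koszul_entry D i (enum_val p) (enum_val q).

Definition koszul_dim (D : pred T) (i : nat) : nat :=
  #|[set F : T | (#|F| == i) && D F]|.

Definition koszul_betti (D : pred T) (i : nat) : nat :=
  koszul_dim D i - \rank (koszul_mx D i) - \rank (koszul_mx D i.+1).

Lemma betti_koszul (e : rel 'I_n) k i a : betti e R k i a = koszul_betti (kvalid e k a) i.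
Proof. by []. Qed.

Lemma eq_koszul_betti (D1 D2 : pred T) i : D1 =1 D2 -> koszul_betti D1 i = koszul_betti D2 i.
Proof.
move=> eqD; rewrite /koszul_betti /koszul_dim.
have -> : [set F : T | (#|F| == i) && D1 F] = [set F : T | (#|F| == i) && D2 F].
  by apply/setP=> F; rewrite !inE eqD.
have eq_mx j : koszul_mx D1 j = koszul_mx D2 j.
  by apply/matrixP=> p q; rewrite !mxE /koszul_entry !eqD.
by rewrite !eq_mx.
Qed.

Lemma pick_setU1D (G : T) y : y \notin G -> [pick j in (y |: G) :\: G] = Some y.
Proof.
move=> yG; have -> : (y |: G) :\: G = [set y].
  apply/setP=> z; rewrite !inE; case: (z =P y) => [->|_]; first by rewrite (negPf yG).
  by rewrite /= andNb.
by case: pickP => [z|/(_ y)]; rewrite inE; [move/eqP->|rewrite eqxx].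
Qed.

Lemma sign_sq (m : nat) : ((-1) ^+ m * (-1) ^+ m = 1 :> R)%R.
Proof. by rewrite -exprD addnn -muln2 exprM sqrr_sign. Qed.

Lemma mul_selmx_l m p (g : 'I_m -> T) (c : 'I_m -> R) (M : 'M[R]_(N, p)) i q :
  ((\matrix_(i, r) (if enum_val r == g i then c i else 0%R)) *m M)%R i q
  = (c i * M (enum_rank (g i)) q)%R.
Proof.
rewrite mxE (bigD1 (enum_rank (g i))) //= !mxE enum_rankK eqxx big1 ?addr0 // => r nr.
rewrite mxE; case: eqP => [E|]; last by rewrite mul0r.
by case/eqP: nr; rewrite -E enum_valK.
Qed.

Lemma mul_selmx_r m p (g : 'I_m -> T) (c : 'I_m -> R) (M : 'M[R]_(p, N)) i q :
  (M *m (\matrix_(r, i) (if enum_val r == g i then c i else 0%R)))%R q i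
  = (M q (enum_rank (g i)) * c i)%R.
Proof.
rewrite mxE (bigD1 (enum_rank (g i))) //= !mxE enum_rankK eqxx big1 ?addr0 // => r nr.
rewrite mxE; case: eqP => [E|]; last by rewrite mulr0.
by case/eqP: nr; rewrite -E enum_valK.
Qed.

Lemma rank_ge_sandwich m (A : 'M[R]_(m, N)) (M : 'M[R]_N) (B : 'M[R]_(N, m)) :
  (A *m M *m B = 1%:M)%R -> (m <= \rank M)%N.
Proof.
move=> E; have := mxrankM_maxl (A *m M) B; rewrite E mxrank1 => h.
exact: leq_trans h (mxrankM_maxr _ _).
Qed.

Definition is_cone (D : pred T) (x : 'I_n) : Prop :=
  forall F : T, x \notin F -> D (x |: F) = D F.

Section Cone.
Variables (D : pred T) (x : 'I_n).
Hypothesis D_cone : is_cone D x.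

(* Adding and removing the apex [x] invert each other on the faces of the
   cone, which exhibits identity minors of the differentials. *)
Lemma rank_koszul_ge_base j :
  (#|[set F : T | [&& x \notin F, #|F| == j & D F]]| <= \rank (koszul_mx D j.+1))%N.
Proof.
set S := [set F : T | _].
pose A := (\matrix_(i < #|S|, r < N)
  (if enum_val r == x |: enum_val i then ksign R (x |: enum_val i) x else 0))%R.
pose B := (\matrix_(r < N, i < #|S|) (if enum_val r == enum_val i then (1:R) else 0))%R.
apply: (@rank_ge_sandwich _ A _ B); apply/matrixP=> i i'.
rewrite mul_selmx_r mul_selmx_l mulr1 !mxE !enum_rankK /koszul_entry.
have := enum_valP i; rewrite inE => /and3P[xi ci Di].
have := enum_valP i'; rewrite inE => /and3P[xi' ci' Di'].
case: (eqVneq i i') => [<-|ne].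
  rewrite cardsU1 xi (eqP ci) D_cone // Di subsetUr /= eqxx pick_setU1D //.
  exact: sign_sq.
case: ifP => [/and5P[_ _ _ sub _]|]; last by rewrite mulr0.
have sub' : enum_val i' \subset enum_val i.
  apply/subsetP=> z zi'; have := subsetP sub z zi'; rewrite !inE.
  by case: (z =P x) => [ez _|_ //]; move: xi'; rewrite -ez zi'.
have : enum_val i' == enum_val i by rewrite eqEcard sub' (eqP ci) (eqP ci') leqnn.
by rewrite (inj_eq enum_val_inj) eq_sym (negPf ne).
Qed.

Lemma rank_koszul_ge_apex j :
  (#|[set F : T | [&& x \in F, #|F| == j & D F]]| <= \rank (koszul_mx D j))%N.
Proof.
set S := [set F : T | _].
pose A := (\matrix_(i < #|S|, r < N) (if enum_val r == enum_val i then (1:R) else 0))%R.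
pose B := (\matrix_(r < N, i < #|S|)
  (if enum_val r == enum_val i :\ x then ksign R (enum_val i) x else 0))%R.
apply: (@rank_ge_sandwich _ A _ B); apply/matrixP=> i i'.
rewrite mul_selmx_r mul_selmx_l mul1r !mxE !enum_rankK /koszul_entry.
have := enum_valP i; rewrite inE => /and3P[xi ci Di].
have := enum_valP i'; rewrite inE => /and3P[xi' ci' Di'].
have Dx : D (enum_val i :\ x) by rewrite -D_cone ?setD11 // setD1K.
case: (eqVneq i i') => [<-|ne].
  rewrite ci Di Dx subD1set (cardsD1 x (enum_val i)) xi eqxx /=.
  rewrite -{1}(setD1K xi) pick_setU1D ?setD11 //; exact: sign_sq.
case: ifP => [/and5P[_ _ _ sub _]|]; last by rewrite mul0r.
have sub' : enum_val i' \subset enum_val i.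
  apply/subsetP=> z zi'; case: (z =P x) => [->//|/eqP zx].
  by apply: (subsetP sub); rewrite !inE zx.
have : enum_val i' == enum_val i by rewrite eqEcard sub' (eqP ci) (eqP ci') leqnn.
by rewrite (inj_eq enum_val_inj) eq_sym (negPf ne).
Qed.

Lemma koszul_betti_cone j : koszul_betti D j = 0%N.
Proof.
have base := rank_koszul_ge_base j; have apex := rank_koszul_ge_apex j.
rewrite /koszul_betti /koszul_dim; set C := [set F : T | _].
rewrite -(cardsID [set F : T | x \in F] C).
have -> : C :&: [set F : T | x \in F] = [set F : T | [&& x \in F, #|F| == j & D F]].
  by apply/setP=> F; rewrite !inE andbC.
have -> : C :\: [set F : T | x \in F] = [set F : T | [&& x \notin F, #|F| == j & D F]].
  by apply/setP=> F; rewrite !inE andbC.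
lia.
Qed.

End Cone.

Definition mask (P : pred T) : 'M[R]_N := diag_mx (\row_p ((P (enum_val p))%:R))%R.

Lemma maskE (P Q : pred T) (M : 'M[R]_N) p q :
  (mask P *m M *m mask Q)%R p q = ((P (enum_val p))%:R * M p q * (Q (enum_val q))%:R)%R.
Proof. by rewrite /mask mul_mx_diag mul_diag_mx !mxE. Qed.

(* With the block [~P x Q] zero, [M] is block triangular, so the ranks of its
   two diagonal blocks add up to at most its rank. *)
Lemma rank_mask_split (M : 'M[R]_N) (P Q : pred T) :
  (forall p q, ~~ P (enum_val p) -> Q (enum_val q) -> M p q = 0%R) ->
  (\rank (mask P *m M *m mask Q)%R + \rank (mask (predC P) *m M *m mask (predC Q))%R
    <= \rank M)%N.
Proof.
move=> M0; rewrite -(mxrank_mul_ker M (mask Q)); apply: leq_add.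
  by rewrite -mulmxA mxrankM_maxr.
apply: leq_trans (mxrankM_maxl _ _) _.
apply: mxrankS; rewrite sub_capmx submxMl sub_kermx /=.
apply/eqP/matrixP=> p q; rewrite maskE mxE /=.
case Pp: (P (enum_val p)); first by rewrite /= !mul0r.
case Qq: (Q (enum_val q)); last by rewrite mulr0.
by rewrite M0 ?Pp // mulr0 mul0r.
Qed.

Definition cx_link (D : pred T) (x : 'I_n) : pred T := fun F => (x \notin F) && D (x |: F).
Definition cx_del (D : pred T) (x : 'I_n) : pred T := fun F => (x \notin F) && D F.

Lemma card_sep_setU1 (z : 'I_n) (A : T) (P : pred 'I_n) : z \notin A ->
  #|[set u in z |: A | P u]| = (P z + #|[set u in A | P u]|)%N.
Proof.
move=> zA; case Pz: (P z).
  have -> : [set u in z |: A | P u] = z |: [set u in A | P u].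
    by apply/setP=> u; rewrite !inE; case: (u =P z) => [->|] //=; rewrite Pz.
  by rewrite cardsU1 inE (negPf zA).
rewrite add0n; apply: eq_card => u; rewrite !inE; case: (u =P z) => [->|] //=.
by rewrite Pz andbF.
Qed.

Lemma subset_card_succ (G F : T) : G \subset F -> #|F| = #|G|.+1 ->
  exists2 y, y \notin G & F = y |: G.
Proof.
move=> sub cFG; have : F :\: G != set0.
  by apply/negP; rewrite setD_eq0 => /subset_leq_card; rewrite cFG ltnn.
case/set0Pn=> y; rewrite inE => /andP[yG yF]; exists y => //.
apply/eqP; rewrite eq_sym eqEcard cFG cardsU1 yG leqnn andbT.
by rewrite subUset sub1set yF sub.
Qed.

Section LinkDeletion.
Variables (D : pred T) (x : 'I_n).
Local Notation off_x := (fun F : T => x \notin F).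
Local Notation on_x := (fun F : T => x \in F).

Lemma koszul_mx_del j : koszul_mx (cx_del D x) j = (mask off_x *m koszul_mx D j *m mask off_x)%R.
Proof.
apply/matrixP=> p q; rewrite maskE !mxE /koszul_entry /cx_del.
case: (boolP (x \in enum_val p)) => xp; case: (boolP (x \in enum_val q)) => xq /=;
  rewrite ?mul0r ?mulr0 ?mul1r ?mulr1 ?andbF //=; by case: ifP.
Qed.

Let sgx (F : T) : R := (-1) ^+ #|[set u in F | (x < u)%N]|.

Lemma koszul_entry_link j (F G : T) : x \notin F -> x \notin G ->
  koszul_entry (cx_link D x) j F G =
  (sgx F * koszul_entry D j.+1 (x |: F) (x |: G) * sgx G)%R.
Proof.
move=> xF xG; rewrite /koszul_entry /cx_link xF xG.
have -> : (x |: G \subset x |: F) = (G \subset F).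
  apply/idP/idP=> [/subsetP sub|sub]; last by rewrite setUS.
  apply/subsetP=> z zG; have := sub z; rewrite !inE zG orbT => /(_ isT).
  by case/orP=> // /eqP ezx; rewrite -ezx zG in xG.
rewrite !cardsU1 (negPf xF) (negPf xG) /= !eqSS.
case: ifP => [/and5P[_ _ _ sub /eqP cFG]|_]; last by rewrite mulr0 mul0r.
have [y yG FyG] := subset_card_succ sub cFG.
have yx : y != x by apply: contraNneq xF => <-; rewrite FyG setU11.
rewrite FyG pick_setU1D // setUCA pick_setU1D; last by rewrite !inE (negPf yx).
rewrite /sgx /ksign !card_sep_setU1 // ?ltnn ?inE ?(negPf yx) // !exprD /= !expr0 !mul1r.
set a := ((-1) ^+ (x < y))%R; set g := ((-1) ^+ #|[set u in G | (x < u)%N]|)%R.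
set s := ((-1) ^+ #|[set u in G | (u < y)%N]|)%R.
have -> : (a * g * (a * s) * g = (a * a) * (g * g) * s)%R by ring.
by rewrite !sign_sq !mul1r.
Qed.

Lemma rank_koszul_link j : (\rank (koszul_mx (cx_link D x) j)
  <= \rank (mask on_x *m koszul_mx D j.+1 *m mask on_x)%R)%N.
Proof.
pose c (F : T) : R := if x \in F then 0%R else sgx F.
pose A := (\matrix_(i < N, r < N)
  (if enum_val r == x |: enum_val i then c (enum_val i) else 0))%R.
pose B := (\matrix_(r < N, i < N)
  (if enum_val r == x |: enum_val i then c (enum_val i) else 0))%R.
suff -> : koszul_mx (cx_link D x) j = (A *m (mask on_x *m koszul_mx D j.+1 *m mask on_x) *m B)%R.
  by apply: leq_trans (mxrankM_maxl _ _) _; apply: mxrankM_maxr.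
apply/matrixP=> p q.
rewrite mul_selmx_r mul_selmx_l maskE !mxE !enum_rankK !setU11 mul1r mulr1 /c.
case: (boolP (x \in enum_val p)) => xF; first by rewrite /koszul_entry /cx_link xF /= andbF !mul0r.
case: (boolP (x \in enum_val q)) => xG; first by rewrite /koszul_entry /cx_link xG /= !andbF mulr0.
exact: koszul_entry_link.
Qed.

Lemma rank_koszul_del_link j : (\rank (koszul_mx (cx_del D x) j)
  + \rank (mask on_x *m koszul_mx D j *m mask on_x)%R <= \rank (koszul_mx D j))%N.
Proof.
rewrite koszul_mx_del addnC; apply: rank_mask_split => p q xp xq.
rewrite mxE /koszul_entry; case: ifP => // /and5P[_ _ _ sub _].
by rewrite (subsetP sub _ xq) in xp.
Qed.

Lemma koszul_dim_del_link j :
  koszul_dim D j.+1 = (koszul_dim (cx_del D x) j.+1 + koszul_dim (cx_link D x) j)%N.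
Proof.
rewrite /koszul_dim; set C := [set F : T | _].
rewrite -(cardsID [set F : T | x \in F] C) addnC; congr (_ + _)%N.
  by apply: eq_card => F; rewrite !inE /cx_del andbCA andbA.
have -> : C :&: [set F : T | x \in F] =
    [set x |: F | F in [set F : T | (#|F| == j) && cx_link D x F]].
  apply/setP=> H; rewrite !inE; apply/idP/imsetP.
    case/andP=> /andP[cH DH] xH; exists (H :\ x); last by rewrite setD1K.
    rewrite !inE /cx_link setD11 setD1K // DH andbT.
    by rewrite andbT; move: cH; rewrite (cardsD1 x H) xH add1n eqSS.
  case=> F; rewrite inE /cx_link => /andP[cF /andP[xF DF]] ->.
  by rewrite cardsU1 xF (eqP cF) eqxx DF setU11.
apply: card_in_imset => F1 F2; rewrite !inE /cx_link => /and3P[_ x1 _] /and3P[_ x2 _] E.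
by rewrite -(setU1K x1) -(setU1K x2) E.
Qed.

Lemma koszul_dim0_del : koszul_dim D 0 = koszul_dim (cx_del D x) 0.
Proof.
apply: eq_card => F; rewrite !inE /cx_del.
by case: (boolP (#|F| == 0%N)) => //= /eqP /cards0_eq ->; rewrite inE.
Qed.

Lemma koszul_betti_del_link j :
  (koszul_betti D j.+1 <= koszul_betti (cx_del D x) j.+1 + koszul_betti (cx_link D x) j)%N.
Proof.
rewrite /koszul_betti koszul_dim_del_link.
have := rank_koszul_del_link j.+1; have := rank_koszul_del_link j.+2.
have := rank_koszul_link j; have := rank_koszul_link j.+1.
lia.
Qed.

Lemma koszul_betti0_del : (koszul_betti D 0 <= koszul_betti (cx_del D x) 0)%N.
Proof.
rewrite /koszul_betti koszul_dim0_del.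
have := rank_koszul_del_link 0; have := rank_koszul_del_link 1.
lia.
Qed.

End LinkDeletion.

Definition betti_bounded (D : pred T) (s t : nat) : Prop :=
  forall j, koszul_betti D j != 0%N -> (s <= j + t)%N.

Lemma eq_betti_bounded (D1 D2 : pred T) s t :
  D1 =1 D2 -> betti_bounded D2 s t -> betti_bounded D1 s t.
Proof. by move=> eqD bD2 j; rewrite (eq_koszul_betti j eqD); apply: bD2. Qed.

Lemma betti_bounded_cone (D : pred T) x s t : is_cone D x -> betti_bounded D s t.
Proof. by move=> Dx j; rewrite (koszul_betti_cone Dx) eqxx. Qed.

Lemma betti_bounded_le (D : pred T) s t t' :
  (t <= t')%N -> betti_bounded D s t -> betti_bounded D s t'.
Proof. by move=> tt' bD j /bD sj; apply: leq_trans sj _; rewrite leq_add2l. Qed.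

Lemma betti_bounded_del_link (D : pred T) x s td tl t :
  betti_bounded (cx_del D x) s td -> betti_bounded (cx_link D x) s tl ->
  (td < t)%N -> (tl <= t)%N -> betti_bounded D s.+1 t.
Proof.
move=> bdel blink td_t tl_t [|j] nz.
  have := koszul_betti0_del D x.
  case: (koszul_betti (cx_del D x) 0 =P 0%N) => [->|/eqP /bdel]; last lia.
  by rewrite leqn0 (negPf nz).
have := koszul_betti_del_link D x j.
case: (koszul_betti (cx_del D x) j.+1 =P 0%N) => [->|/eqP /bdel]; last lia.
case: (koszul_betti (cx_link D x) j =P 0%N) => [->|/eqP /blink]; last lia.
by rewrite leqn0 (negPf nz).
Qed.

End KoszulComplex.

(** * Matchings and matching complexes *)

Section Matchings.
Variables (n : nat) (e : rel 'I_n).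
Hypotheses (e_sym : symmetric e) (e_irr : irreflexive e).
Local Notation T := {set 'I_n}.

Lemma is_edgeP (f : T) : is_edge e f -> exists a b, [/\ e a b, a != b & f = [set a; b]].
Proof.
case/existsP=> a /existsP[b /andP[eab /eqP ->]]; exists a, b; split=> //.
by apply: contraTneq eab => ->; rewrite e_irr.
Qed.

Lemma is_edge2 a b : e a b -> is_edge e [set a; b].
Proof. by move=> eab; apply/existsP; exists a; apply/existsP; exists b; rewrite eab eqxx. Qed.

Lemma edge_partner (f : T) z : is_edge e f -> z \in f -> exists2 y, y \in f & e z y.
Proof.
case/is_edgeP=> a [b [eab _ ->]]; rewrite !inE => /orP[]/eqP->.
  by exists b; rewrite ?inE ?eqxx ?orbT.
by exists a; rewrite ?inE ?eqxx // e_sym.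
Qed.

Lemma matching_edge (M : {set T}) (f : T) : matching e M -> f \in M -> is_edge e f.
Proof. by case/andP=> /forall_inP edgeM _; apply: edgeM. Qed.

Lemma cover_partner (M : {set T}) z : matching e M -> z \in cover M ->
  exists2 y, y \in cover M & e z y.
Proof.
move=> mM /bigcupP[f fM zf]; have [y yf ezy] := edge_partner (matching_edge mM fM) zf.
by exists y => //; apply/bigcupP; exists f.
Qed.

Lemma matchingS (M M' : {set T}) : M' \subset M -> matching e M -> matching e M'.
Proof.
move=> sub /andP[/forall_inP edgeM ti]; apply/andP; split; last exact: trivIsetS ti.
by apply/forall_inP=> f fM; apply: edgeM; apply: (subsetP sub).
Qed.

Lemma matching0 : matching e set0.
Proof.
apply/andP; split; first by apply/forall_inP=> f; rewrite inE.
by apply/trivIsetP=> A B; rewrite inE.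
Qed.

Lemma matching_eq_through (M : {set T}) f g b : matching e M -> f \in M -> g \in M ->
  b \in f -> b \in g -> f = g.
Proof.
case/andP=> _ /trivIsetP ti fM gM bf bg; apply/eqP/negPn/negP=> fg.
by move: (ti f g fM gM fg) => /disjointFr/(_ bf); rewrite bg.
Qed.

Lemma matching_card_through (M A : {set T}) b : matching e M -> A \subset M ->
  (forall f, f \in A -> b \in f) -> (#|A| <= 1)%N.
Proof.
move=> mM /subsetP sub Ab; apply/card_le1_eqP=> f g fA gA.
exact: matching_eq_through mM (sub g gA) (sub f fA) (Ab g gA) (Ab f fA).
Qed.

Lemma matchingU1 (M : {set T}) (g : T) : matching e M -> is_edge e g ->
  [disjoint g & cover M] -> matching e (g |: M) /\ g \notin M.
Proof.
move=> mM eg dis; case/andP: (mM) => /forall_inP edgeM ti.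
have [ti' gM] : trivIset (g |: M) /\ g \notin M.
  apply: trivIsetU1 => //.
  - by move=> f fM; apply: disjointWr dis; exact: bigcup_sup fM.
  - by apply/negP=> /edgeM /is_edgeP[a [b [_ _ /setP/(_ a)]]]; rewrite !inE eqxx.
split=> //; apply/andP; split=> //; apply/forall_inP=> f.
by case/setU1P=> [->//|]; apply: edgeM.
Qed.

Lemma coverU1 (g : T) (M : {set T}) : cover (g |: M) = g :|: cover M.
Proof. by rewrite /cover bigcup_setU big_set1. Qed.

Lemma matching_sub_card (M : {set T}) k : matching e M -> (k <= #|M|)%N ->
  exists M', [/\ matching e M', M' \subset M & #|M'| = k].
Proof.
move=> mM /card_geqP[s [us ss sub]]; exists [set f in s].
have sub' : [set f in s] \subset M by apply/subsetP=> f; rewrite inE => /sub.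
by split=> //; [exact: matchingS mM | rewrite cardsE (card_uniqP us)].
Qed.

Lemma matching_card_inside (M : {set T}) (X : T) b : matching e M ->
  (forall f, f \in M -> ~~ (f \subset X) -> b \in f) ->
  (#|M| <= #|[set f in M | f \subset X]|.+1)%N.
Proof.
move=> mM out_b; set M' := [set f in M | _].
have sub : M' \subset M by apply/subsetP=> f; rewrite inE => /andP[].
have : (#|M :\: M'| <= 1)%N.
  by apply: (matching_card_through (b := b) mM (subsetDl M M')) => f /setDP[fM];
    rewrite inE fM /=; apply: out_b.
by rewrite -(cardsID M' M) (setIidPr sub); lia.
Qed.

(* For [B = set0] this is the
   Koszul complex of [I(G)^[k]] in the squarefree degree of [W]; spare vertices
   appear when vertices are deleted. *)
Definition matching_cx (k : nat) (B W : T) : pred T := fun F =>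
  (F \subset W) &&
  [exists M : {set T}, [&& matching e M, (k <= #|M|)%N & cover M \subset (W :\: F) :|: B]].

Lemma matching_cx_link k (B W : T) x : x \in W ->
  cx_link (matching_cx k B W) x =1 matching_cx k B (W :\ x).
Proof.
move=> xW F; rewrite /cx_link /matching_cx.
have -> : W :\: (x |: F) = (W :\ x) :\: F.
  by apply/setP=> v; rewrite !inE; case: (v == x); case: (v \in F); case: (v \in W).
rewrite andbA; congr (_ && _); rewrite andbC; apply/idP/idP.
  case/andP=> sub xF; apply/subsetP=> v vF; rewrite !inE (subsetP sub) ?inE ?vF ?orbT //.
  by rewrite andbT; apply: contraNneq xF => <-.
move=> sub; have xF : x \notin F by apply/negP=> /(subsetP sub); rewrite !inE eqxx.
rewrite xF andbT; apply/subsetP=> v; rewrite !inE => /orP[/eqP->//|vF].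
by have := subsetP sub v vF; rewrite !inE => /andP[].
Qed.

Lemma matching_cx_del k (B W : T) x : x \in W ->
  cx_del (matching_cx k B W) x =1 matching_cx k (x |: B) (W :\ x).
Proof.
move=> xW F; rewrite /cx_del /matching_cx.
case: (boolP (x \in F)) => xF /=.
  by apply/esym/negbTE; apply/negP=> /andP[/subsetP/(_ x xF)]; rewrite !inE eqxx.
have -> : (W :\: F) :|: B = ((W :\ x) :\: F) :|: (x |: B).
  by apply/setP=> v; rewrite !inE; case: (v =P x) => [->|] /=; rewrite ?xW ?xF ?orbT.
congr (_ && _); apply/idP/idP=> sub; apply/subsetP=> v vF.
  by rewrite !inE (subsetP sub) // andbT; apply: contraNneq xF => <-.
by have := subsetP sub v vF; rewrite !inE => /andP[].
Qed.

Lemma matching_cx0_cone (B W : T) x : x \in W -> is_cone (matching_cx 0 B W) x.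
Proof.
have cx0 F : matching_cx 0 B W F = (F \subset W).
  rewrite /matching_cx; case: (F \subset W) => //=; apply/existsP; exists set0.
  by rewrite matching0 /= /cover big_set0 sub0set.
by move=> xW F _; rewrite !cx0 subUset sub1set xW.
Qed.

Lemma matching_cx_cone k (B W : T) x : x \in W -> x \notin B ->
  (forall y, y \in W :|: B -> ~~ e x y) -> is_cone (matching_cx k B W) x.
Proof.
move=> xW xB x_iso F xF; rewrite /matching_cx subUset sub1set xW /=.
congr (_ && _); apply/existsP/existsP=> -[M /and3P[mM kM cM]]; exists M; rewrite mM kM /=.
  apply: subset_trans cM _; apply/subsetP=> v; rewrite !inE.
  by case/orP=> [/andP[/norP[_ ->] ->]|->]; rewrite ?orbT.
apply/subsetP=> v vM; have := subsetP cM v vM; rewrite !inE.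
case: (v =P x) => [vx|_]; last by [].
have [y yM exy] := cover_partner mM vM; rewrite vx in exy.
have : y \in W :|: B.
  by have := subsetP cM y yM; rewrite !inE => /orP[/andP[_ ->]|->]; rewrite ?orbT.
by move/x_iso; rewrite exy.
Qed.

Lemma matching_cx_free k (u : 'I_n) (W : T) : u \notin W ->
  (forall y, y \in W -> ~~ e u y) -> matching_cx k [set u] W =1 matching_cx k set0 W.
Proof.
move=> uW u_iso F; rewrite /matching_cx setU0; congr (_ && _).
apply/existsP/existsP=> -[M /and3P[mM kM cM]]; exists M; rewrite mM kM //=; last first.
  exact: subset_trans cM (subsetUl _ _).
apply/subsetP=> v vM; have := subsetP cM v vM; rewrite !inE.
case: (v =P u) => [vu|_]; last by rewrite orbF.
have [y yM euy] := cover_partner mM vM; rewrite vu in euy.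
have := subsetP cM y yM; rewrite !inE => /orP[/andP[_ /u_iso]|/eqP yu].
  by rewrite euy.
by move: euy; rewrite yu e_irr.
Qed.

(* A spare edge [ab] whose end [a] sees nothing of [W] can always be added
   to a matching, and is the only matching edge that can use [a] or [b]. *)
Lemma matching_cx_pair k (a b : 'I_n) (W : T) : a \notin W -> b \notin W -> e a b ->
  (forall y, y \in W -> ~~ e a y) -> (0 < k)%N ->
  matching_cx k [set a; b] W =1 matching_cx k.-1 set0 W.
Proof.
move=> aW bW eab a_iso k_gt0 F; rewrite /matching_cx setU0; congr (_ && _).
apply/existsP/existsP=> -[M /and3P[mM kM cM]].
  have out_b f : f \in M -> ~~ (f \subset W :\: F) -> b \in f.
    move=> fM /subsetPn[z zf zWF].
    have coverM v : v \in f -> v \in (W :\: F) :|: [set a; b].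
      by move=> vf; apply: (subsetP cM); apply/bigcupP; exists f.
    have /setUP[|/set2P[za|<-//]] := coverM z zf; first by rewrite (negPf zWF).
    have [y yf ezy] := edge_partner (matching_edge mM fM) zf; rewrite za in ezy.
    have /setUP[/setDP[/a_iso]|/set2P[ya|<-//]] := coverM y yf; first by rewrite ezy.
    by move: ezy; rewrite ya e_irr.
  exists [set f in M | f \subset W :\: F].
  have sub : [set f in M | f \subset W :\: F] \subset M.
    by apply/subsetP=> f; rewrite inE => /andP[].
  rewrite (matchingS sub mM) /=; apply/andP; split.
    by rewrite -ltnS prednK //; apply: leq_trans kM (matching_card_inside mM out_b).
  by apply/subsetP=> v /bigcupP[f]; rewrite inE => /andP[_ /subsetP]; apply.
have dis : [disjoint [set a; b] & cover M].
  rewrite disjoint_sym disjoints_subset; apply/subsetP=> v /(subsetP cM).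
  by rewrite !inE => /andP[_ vW]; apply/norP; split; apply: contraTneq vW => ->.
have [mabM abM] := matchingU1 mM (is_edge2 eab) dis.
exists ([set a; b] |: M); rewrite mabM cardsU1 abM coverU1 /=; apply/andP; split.
  by rewrite add1n -(prednK k_gt0) ltnS.
by rewrite subUset subsetUr (subset_trans cM (subsetUl _ _)).
Qed.

Lemma eq_mono_in_sqpow k (b1 b2 : {ffun 'I_n -> nat}) :
  (forall v, (0 < b1 v) = (0 < b2 v))%N -> mono_in_sqpow e k b1 = mono_in_sqpow e k b2.
Proof.
move=> supp12; apply: eq_existsb => M; congr [&& _, _ & _].
by apply: eq_forallb => v; rewrite supp12.
Qed.

(* In a degree [a] with [a v >= 2], [x_v] divides [x^(a - 1_F)] whether or not
   [v] is in [F]. *)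
Lemma kvalid_cone k (a : {ffun 'I_n -> nat}) v : (2 <= a v)%N -> is_cone (kvalid e k a) v.
Proof.
move=> av F vF; rewrite /kvalid; congr (_ && _).
  apply/forall_inP/forall_inP=> aF u uF; first by apply: aF; rewrite !inE uF orbT.
  by move: uF; rewrite !inE => /orP[/eqP->|/aF//]; apply: leq_trans av.
apply: eq_mono_in_sqpow => u; rewrite /subind !ffunE !inE.
case: (u =P v) => [->|_] //=.
by rewrite (negPf vF) subn0 subn1; move: av; case: (a v) => [|[|]].
Qed.

Lemma kvalid_matching_cx k (a : {ffun 'I_n -> nat}) : (forall v, a v <= 1)%N ->
  kvalid e k a =1 matching_cx k set0 [set v | (0 < a v)%N].
Proof.
move=> a01 F; rewrite /kvalid /matching_cx setU0; congr (_ && _).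
  by apply/forall_inP/subsetP=> aF u uF; [rewrite inE aF | have := aF u uF; rewrite inE].
apply/existsP/existsP=> -[M /and3P[mM cM fM]].
  exists M; rewrite mM (eqP cM) leqnn /=; apply/subsetP=> u uM.
  have := forall_inP fM u uM; rewrite /subind ffunE !inE.
  by case: (u \in F); rewrite /= ?subn0 // subn1; move: (a01 u); case: (a u) => [|[|]].
have [M' [mM' sub cM']] := matching_sub_card mM cM.
exists M'; rewrite mM' cM' eqxx /=; apply/forall_inP=> u uM'.
have uM : u \in cover M.
  by case/bigcupP: uM' => f fM' uf; apply/bigcupP; exists f => //; apply: (subsetP sub).
have := subsetP fM u uM; rewrite !inE => /andP[uF au].
by rewrite /subind ffunE (negPf uF) subn0.
Qed.

(** * Admissible matchings *)

Definition gaps (P : {set {set T}}) : bool :=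
  [forall B in P, forall C in P, (B != C) ==> [forall f in B, forall g in C, gap e f g]].

Lemma gapsP (P : {set {set T}}) : reflect
  (forall B C, B \in P -> C \in P -> B != C -> forall f g, f \in B -> g \in C -> gap e f g)
  (gaps P).
Proof.
apply: (iffP forall_inP) => [gP B C BP CP BC f g fB gC|gP B BP].
  have /forall_inP/(_ C CP) := gP B BP.
  by rewrite BC => /forall_inP/(_ f fB)/forall_inP; apply.
apply/forall_inP=> C CP; apply/implyP=> BC; apply/forall_inP=> f fB.
by apply/forall_inP=> g gC; exact: gP BP CP BC f g fB gC.
Qed.

Lemma gap_sym f g : gap e f g = gap e g f.
Proof.
rewrite /gap disjoint_sym; congr (_ && _).
by apply/forall_inP/forall_inP=> gfg a aS; apply/forall_inP=> b bS;
  have /forall_inP/(_ a aS) := gfg b bS; rewrite e_sym.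
Qed.

Definition adm_partition (k : nat) (M : {set T}) (P : {set {set T}}) : bool :=
  [&& partition P M, gaps P & (#|M| <= #|P| + k - 1)%N].

Definition kadm_in (W : T) (k : nat) (M : {set T}) : bool :=
  [&& matching e M, cover M \subset W & [exists P, adm_partition k M P]].

(* [aim] of the induced subgraph on [W], without the requirement that blocks
   induce forests: in a forest that requirement is automatic. *)
Definition aim_in (W : T) (k : nat) : nat := \max_(M | kadm_in W k M) #|M|.

Lemma kadm_in0 W k : kadm_in W k set0.
Proof.
rewrite /kadm_in matching0 /cover big_set0 sub0set /=; apply/existsP; exists set0.
rewrite /adm_partition partition_set0 eqxx !cards0 /=; apply/andP; split=> //.
by apply/gapsP=> B C; rewrite inE.
Qed.

Lemma adm_partition_add k' k M P g : adm_partition k' M P -> g \notin M ->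
  (forall f, f \in M -> gap e g f) -> (k' <= k)%N -> (0 < k)%N ->
  adm_partition k (g |: M) ([set g] |: P).
Proof.
case/and3P=> pP gP cardP gM g_gap k'k k_gt0.
have gnP : [set g] \notin P.
  apply: contra gM => gP'; rewrite -(cover_partition pP).
  by apply/bigcupP; exists [set g]; rewrite ?set11.
apply/and3P; split.
- apply: partitionU1 => //; first by apply/set0Pn; exists g; rewrite inE.
  by rewrite disjoints1.
- have side C : C \in P -> forall f h, f \in [set g] -> h \in C -> gap e f h.
    move=> CP f h /set1P-> hC; apply: g_gap.
    by rewrite -(cover_partition pP); apply/bigcupP; exists C.
  apply/gapsP=> B C; rewrite !inE => /orP[/eqP->|BP] /orP[/eqP->|CP].
  + by rewrite eqxx.
  + by move=> _; apply: side.
  + by move=> _ f h fB hC; rewrite gap_sym; apply: (side B BP).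
  + by move/gapsP: gP; apply.
- rewrite !cardsU1 gM (negPf gnP) /=.
  by move: cardP k'k k_gt0; move: #|M| #|P| => a b; lia.
Qed.

Lemma adm_partition_merge k' k M P B0 g : adm_partition k' M P -> B0 \in P -> g \notin M ->
  (forall f, f \in M -> f \notin B0 -> gap e g f) -> (k' < k)%N ->
  adm_partition k (g |: M) ((g |: B0) |: (P :\ B0)).
Proof.
case/and3P=> pP gP cardP B0P gM g_gap k'k.
have B0M := partitionS pP B0P; have covP := cover_partition pP.
have dis : [disjoint g |: B0 & M :\: B0].
  rewrite -setI_eq0; apply/eqP/setP=> h; rewrite !inE.
  by case: (h =P g) => [->|_] /=; [rewrite (negPf gM) andbF | case: (h \in B0)].
have eqM : (g |: B0) :|: (M :\: B0) = g |: M.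
  apply/setP=> h; rewrite !inE; case: (h =P g) => //= _.
  by case hB: (h \in B0) => //=; rewrite (subsetP B0M h hB).
have gB0P : (g |: B0) \notin P :\ B0.
  by rewrite !inE negb_and; apply/orP; right; apply: contra gM => ?; rewrite -covP;
    apply/bigcupP; exists (g |: B0); rewrite ?setU11.
apply/and3P; split.
- rewrite -eqM; apply: partitionU1 (partitionD1 pP B0P) _ dis.
  by apply/set0Pn; exists g; rewrite !inE eqxx.
- have side C : C \in P -> C != B0 -> forall f h, f \in g |: B0 -> h \in C -> gap e f h.
    move=> CP CB0 f h /setU1P[->|fB0] hC.
      apply: g_gap; first by rewrite -covP; apply/bigcupP; exists C.
      apply: contraL hC => hB0.
      by move: (trivIsetP (partition_trivIset pP) C B0 CP B0P CB0) => /disjointFl/(_ hB0) ->.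
    by apply: (elimT (gapsP P) gP B0 C B0P CP _ f h fB0 hC); rewrite eq_sym.
  apply/gapsP=> B C; rewrite !inE => /orP[/eqP->|/andP[BB0 BP]] /orP[/eqP->|/andP[CB0 CP]].
  + by rewrite eqxx.
  + by move=> _; apply: side.
  + by move=> _ f h fC hB; rewrite gap_sym; apply: (side B BP BB0).
  + by move=> BC f h fB hC; apply: (elimT (gapsP P) gP B C BP CP BC f h fB hC).
- rewrite cardsU1 gM cardsU1 (negPf gB0P).
  have := cardsD1 B0 P; rewrite B0P /=.
  by move: cardP k'k; move: #|M| #|P| #|P :\ B0| => a b c; lia.
Qed.

(* The edge [xy] is added to an optimal matching of [Z]: either as a new
   block, or, when it is adjacent to the matching (necessarily at [q]),
   merged into the block of the edge through [q], at the cost of one unit of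
   [k]. *)
Lemma aim_in_extend (Z W : T) k' k x y q :
  x \in W -> y \in W -> e x y -> Z \subset W -> x \notin Z -> y \notin Z -> (0 < k)%N ->
  (forall z, z \in Z -> e x z || e y z -> z != q -> forall t, t \in Z -> ~~ e z t) ->
  (k' < k)%N || ((k' <= k)%N && (q \notin Z)) ->
  (aim_in Z k' < aim_in W k)%N.
Proof.
move=> xW yW exy ZW xZ yZ k_gt0 near_iso kk'.
have [M' admM' ->] : exists2 M', kadm_in Z k' M' & aim_in Z k' = #|M'|.
  rewrite /aim_in (bigmax_eq_arg _ (kadm_in0 Z k')).
  by case: arg_maxnP => [|M' ? _]; [exact: kadm_in0 | exists M'].
case/and3P: admM' => mM' cM' /existsP[P' admP'].
have pP' : partition P' M' by case/and3P: admP'.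
set g := [set x; y].
have dis : [disjoint g & cover M'].
  rewrite disjoint_sym disjoints_subset; apply/subsetP=> v /(subsetP cM') vZ.
  by rewrite !inE; apply/norP; split; [apply: contraNneq _ xZ | apply: contraNneq _ yZ] => <-.
have [mM gM'] := matchingU1 mM' (is_edge2 exy) dis.
suff [P admP] : exists P, adm_partition k (g |: M') P.
  rewrite /aim_in; apply: (bigmax_sup (g |: M')); last by rewrite cardsU1 gM'.
  rewrite /kadm_in mM coverU1 subUset (subset_trans cM' ZW) andbT /=.
  by apply/andP; split; [apply/subsetP=> v /set2P[]-> | apply/existsP; exists P].
pose touch (f : T) := [exists z in f, e x z || e y z].
have touch_q f : f \in M' -> touch f -> q \in f.
  move=> fM /exists_inP[z zf xyz]; case: (eqVneq z q) => [<-//|zq].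
  have zM : z \in cover M' by apply/bigcupP; exists f.
  have [t tM ezt] := cover_partner mM' zM.
  by have := near_iso z (subsetP cM' z zM) xyz zq t (subsetP cM' t tM); rewrite ezt.
have gap_g f : f \in M' -> ~~ touch f -> gap e g f.
  move=> fM nt; apply/andP; split; first by apply: disjointWr dis; exact: bigcup_sup fM.
  apply/forall_inP=> a ag; apply/forall_inP=> b bf; apply: contra nt => eab.
  by apply/exists_inP; exists b => //; case/set2P: ag => <-; rewrite eab ?orbT.
case: (boolP [exists f in M', touch f]) => [/exists_inP[f0 f0M tf0]|/exists_inPn no_touch].
  have f0P' : f0 \in cover P' by rewrite (cover_partition pP').
  exists ((g |: pblock P' f0) |: (P' :\ pblock P' f0)).
  apply: (adm_partition_merge admP') => //; first exact: pblock_mem.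
    move=> f fM fB; apply: (gap_g _ fM); apply: contra fB => tf.
    by rewrite (matching_eq_through mM' fM f0M (touch_q f fM tf) (touch_q f0 f0M tf0)) mem_pblock.
  have qZ : q \in Z by apply: (subsetP cM'); apply/bigcupP; exists f0 => //; exact: touch_q f0 f0M tf0.
  by move: kk'; rewrite qZ andbF orbF.
exists ([set g] |: P'); apply: (adm_partition_add admP') => //.
  by move=> f fM; apply: gap_g fM (no_touch f fM).
by case/orP: kk' => [/ltnW|/andP[]].
Qed.

(** * Forests *)

Section Forest.
Hypothesis G_forest : forest e.

Lemma path_no_chord a b p t : uniq [:: a, b & p] -> path e a (b :: p) -> t \in p -> ~~ e a t.
Proof.
move=> + + tp; case/splitPr: tp => l l2.
have -> : b :: l ++ t :: l2 = rcons (b :: l) t ++ l2 by rewrite /= cat_rcons.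
rewrite -cat_cons cat_uniq cat_path => /andP[uc _] /andP[pc _].
apply/negP=> eat; apply: G_forest.
exists (a :: rcons (b :: l) t); split=> //; first by rewrite /= size_rcons.
  by apply/allP=> z _; rewrite in_setT.
by rewrite /cycle rcons_path pc last_rcons e_sym.
Qed.

Definition upath_in (W : T) (s : seq 'I_n) : bool :=
  [&& uniq s, all [in W] s & if s is a :: l then path e a l else true].

Lemma upath_in_cons W a b s :
  upath_in W [:: a, b & s] = [&& a \notin b :: s, a \in W, e a b & upath_in W (b :: s)].
Proof.
rewrite /upath_in [uniq _]/= [all _ _]/= [path _ _ _]/=.
by case: (a \notin b :: s); case: (a \in W); case: (e a b); rewrite /= ?andbF.
Qed.

Lemma longest_upath_in (W : T) x y : x \in W -> y \in W -> e x y ->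
  exists v u rest, upath_in W [:: v, u & rest] /\
    forall s, upath_in W s -> (size s <= (size rest).+2)%N.
Proof.
move=> xW yW exy.
pose P m := [exists s : m.-tuple 'I_n, upath_in W s].
have P2 : P 2%N.
  apply/existsP; exists [tuple x; y]; rewrite /upath_in /= xW yW exy !andbT inE.
  by apply: contraTneq exy => ->; rewrite e_irr.
have ub m : P m -> (m <= n)%N.
  move=> /existsP[s /and3P[us _ _]]; rewrite -(size_tuple s) -(card_uniqP us).
  by apply: (leq_trans (max_card _)); rewrite card_ord.
have [m /existsP[s ps] max_m] := ex_maxnP (ex_intro P 2%N P2) ub.
have longest s' : upath_in W s' -> (size s' <= m)%N.
  by move=> ps'; apply: max_m; apply/existsP; exists (in_tuple s').
move: ps (size_tuple s) (max_m _ P2) longest.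
case: (tval s) => [|v [|u rest]] /=; [by move=> _ <- | by move=> _ <- |].
by move=> ps <- _ longest; exists v, u, rest.
Qed.

Section LongestPath.
Variables (W : T) (v u : 'I_n) (rest : seq 'I_n).
Hypothesis vur_path : upath_in W [:: v, u & rest].
Hypothesis vur_longest : forall s, upath_in W s -> (size s <= (size rest).+2)%N.

Lemma longest_upath_leaf t : t \in W -> e v t -> t = u.
Proof.
move=> tW evt; case: (eqVneq t u) => // tu; exfalso.
have [vur_uniq _ vur_edges] := and3P vur_path.
case: (boolP (t \in [:: v, u & rest])) => [|tvur].
  rewrite !inE (negPf tu) /= => /orP[/eqP tv|trest]; first by move: evt; rewrite tv e_irr.
  by rewrite (negPf (path_no_chord vur_uniq vur_edges trest)) in evt.
have := @vur_longest [:: t, v, u & rest].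
by rewrite upath_in_cons tvur tW e_sym evt vur_path ltnn => /(_ isT).
Qed.

Lemma longest_upath_star z : z \in W -> e u z -> z != head u rest ->
  forall t, t \in W -> e z t -> t = u.
Proof.
move=> zW euz zp t tW ezt.
case: (eqVneq z v) => [zv|zv]; first by apply: longest_upath_leaf; rewrite // -zv.
case: (eqVneq t u) => // tu; exfalso.
have zu : z != u by apply: contraTneq euz => ->; rewrite e_irr.
have ur_path : upath_in W (u :: rest) by move: vur_path; rewrite upath_in_cons => /and4P[].
have zrest : z \notin rest.
  move: ur_path zp; case: (rest) => [//|p rest'].
  rewrite upath_in_cons => /and4P[up _ eup /and3P[pr_uniq _ prest']] zp.
  rewrite inE (negPf zp) /=; apply: contraTN euz => zr.
  by apply: (path_no_chord (b := p)) zr; rewrite /= ?up ?eup.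
have zur : z \notin u :: rest by rewrite inE (negPf zu) zrest.
case: (boolP (t \in [:: v, u & rest])) => [|tvur].
  rewrite !inE (negPf tu) /= => /orP[/eqP tv|trest].
    by move: zu; rewrite (longest_upath_leaf zW) ?eqxx // e_sym -tv.
  have [ur_uniq _ ur_edges] := and3P ur_path.
  have zur_uniq : uniq [:: z, u & rest] by rewrite cons_uniq zur.
  have zur_edges : path e z (u :: rest) by rewrite /= ur_edges andbT e_sym.
  by rewrite (negPf (path_no_chord zur_uniq zur_edges trest)) in ezt.
have := @vur_longest [:: t, z, u & rest].
rewrite upath_in_cons tW (e_sym t) ezt upath_in_cons zW (e_sym z) euz ur_path zur !andbT ltnn.
have tz : t != z by apply: contraTneq ezt => ->; rewrite e_irr.
by move: tvur; rewrite !inE !negb_or tz => /and3P[_ -> ->] /(_ isT).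
Qed.

End LongestPath.

(** * Regularity of the matching complexes *)

Variable R : fieldType.

Lemma card_setD1_succ (Y : T) y : y \in Y -> #|Y| = #|Y :\ y|.+1.
Proof. by move=> yY; rewrite (cardsD1 y Y) yY. Qed.

Lemma addn_pred_ltn a b k : (0 < k)%N -> (a < b)%N -> (a + k.-1 < b + k - 1)%N.
Proof. by case: k => // k _ /=; lia. Qed.

Lemma addn_ltn_pred a b k : (a < b)%N -> (a + k <= b + k - 1)%N.
Proof. lia. Qed.

Section DeletedHub.
Variables (W : T) (k : nat) (u v p : 'I_n).
Hypothesis IH : forall k' (W' : T), (#|W'| < #|W|)%N ->
  betti_bounded R (matching_cx k' set0 W') #|W'| (aim_in W' k' + k').
Hypotheses (k_gt0 : (0 < k)%N) (uW : u \in W) (vW : v \in W) (euv : e u v).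
Hypothesis v_leaf : forall t, t \in W -> e v t -> t = u.
Hypothesis u_star : forall z, z \in W -> e u z -> z != p -> forall t, t \in W -> e z t -> t = u.

Local Notation hub_bound := (aim_in W k + k - 1).

Section Subset.
Variable Y : T.
Hypothesis YWu : Y \subset W :\ u.

Let Y_W y : y \in Y -> y \in W.
Proof. by move/(subsetP YWu); rewrite inE => /andP[]. Qed.

Let uY : u \notin Y.
Proof. by apply/negP=> /(subsetP YWu); rewrite !inE eqxx. Qed.

Let ltW (Z : T) : Z \subset Y -> (#|Z| < #|W|)%N.
Proof.
move=> ZY; apply: (@leq_ltn_trans #|W :\ u|); last by rewrite (cardsD1 u W) uW.
exact/subset_leq_card/(subset_trans ZY).
Qed.

Lemma hub_del_leaf l : l \in Y -> e u l -> (forall t, t \in W -> e l t -> t = u) ->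
  betti_bounded R (matching_cx k [set u] (Y :\ l)) #|Y :\ l| hub_bound ->
  betti_bounded R (matching_cx k [set u] Y) #|Y| hub_bound.
Proof.
move=> lY eul l_leaf IHY; rewrite (card_setD1_succ lY).
have lYl : l \notin Y :\ l by rewrite !inE eqxx.
have uYl : u \notin Y :\ l by rewrite !inE negb_and uY orbT.
apply: (betti_bounded_del_link (x := l) (td := aim_in (Y :\ l) k.-1 + k.-1)) (leqnn _).
- apply: eq_betti_bounded (matching_cx_del _ _ lY) _.
  apply: eq_betti_bounded (matching_cx_pair _ _ _ _ k_gt0) _ => //; first by rewrite e_sym.
    by move=> y /setD1P[_ yY]; apply: contraNN uY => /(l_leaf _ (Y_W yY)) <-.
  exact/IH/ltW/subD1set.
- exact: eq_betti_bounded (matching_cx_link _ _ lY) IHY.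
- apply: addn_pred_ltn => //.
  apply: (aim_in_extend (x := u) (y := l) (q := p)) => //; rewrite ?prednK ?leqnn //.
  + exact: Y_W.
  + by apply/subsetP=> y /setD1P[_ /Y_W].
  + move=> z /setD1P[_ zY] /orP[euz|elz] zp t /setD1P[_ tY].
      by apply: contraNN uY => /(u_star (Y_W zY) euz zp (Y_W tY)) <-.
    by move: uY; rewrite -(l_leaf z (Y_W zY) elz) zY.
Qed.

Lemma hub_del_pivot q : q \in Y -> e u q -> (forall z, z \in Y -> e u z -> z = q) ->
  v \notin Y -> betti_bounded R (matching_cx k [set u] Y) #|Y| hub_bound.
Proof.
move=> qY euq u_nbr vY; rewrite (card_setD1_succ qY).
have qYq : q \notin Y :\ q by rewrite !inE eqxx.
have uYq : u \notin Y :\ q by rewrite !inE negb_and uY orbT.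
have u_iso y : y \in Y :\ q -> ~~ e u y.
  by case/setD1P=> yq yY; apply: contra yq => /(u_nbr _ yY)->.
have aim_lt k' : (k' <= k)%N -> (aim_in (Y :\ q) k' < aim_in W k)%N.
  move=> k'k; apply: (aim_in_extend (x := u) (y := v) (q := u)) => //.
  + by apply/subsetP=> y /setD1P[_ /Y_W].
  + by rewrite !inE negb_and vY orbT.
  + move=> z zYq /orP[euz|/(v_leaf (Y_W (setD1P zYq).2))->]; last by rewrite eqxx.
    by rewrite (negPf (u_iso z zYq)) in euz.
  + by rewrite k'k uYq orbT.
apply: (betti_bounded_del_link (x := q) (td := aim_in (Y :\ q) k.-1 + k.-1)
                                (tl := aim_in (Y :\ q) k + k)).
- apply: eq_betti_bounded (matching_cx_del _ _ qY) _; rewrite setUC.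
  apply: eq_betti_bounded (matching_cx_pair _ _ euq u_iso k_gt0) _ => //.
  exact/IH/ltW/subD1set.
- apply: eq_betti_bounded (matching_cx_link _ _ qY) _.
  apply: eq_betti_bounded (matching_cx_free _ uYq u_iso) _.
  exact/IH/ltW/subD1set.
- by apply: addn_pred_ltn => //; apply: aim_lt; rewrite leq_pred.
- exact/addn_ltn_pred/aim_lt.
Qed.

Lemma hub_del_free : (forall y, y \in Y -> ~~ e u y) ->
  betti_bounded R (matching_cx k [set u] Y) #|Y| hub_bound.
Proof.
move=> u_iso; apply: eq_betti_bounded (matching_cx_free _ uY u_iso) _.
apply: (betti_bounded_le _ (@IH k Y (ltW (subxx Y)))); apply: addn_ltn_pred.
apply: (aim_in_extend (x := u) (y := v) (q := u)) => //.
+ by apply/subsetP=> y /Y_W.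
+ by apply: contraTN euv => /u_iso.
+ move=> z zY /orP[euz|/(v_leaf (Y_W zY))->]; last by rewrite eqxx.
  by rewrite (negPf (u_iso z zY)) in euz.
+ by rewrite leqnn uY orbT.
Qed.

End Subset.

Lemma hub_del_bounded (Y : T) : Y \subset W :\ u ->
  betti_bounded R (matching_cx k [set u] Y) #|Y| hub_bound.
Proof.
move: {2}#|Y| (leqnn #|Y|) => m; elim: m Y => [|m IHm] Y cY YWu.
  by move=> j _; move: cY; rewrite leqn0 => /eqP->.
have Y_W y : y \in Y -> y \in W by move/(subsetP YWu); rewrite inE => /andP[].
pose is_leaf l := e u l && [forall t in W, e l t ==> (t == u)].
have [/exists_inP[l lY /andP[eul /forall_inP l_leaf]]|/exists_inPn no_leaf] :=
  boolP [exists l in Y, is_leaf l].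
  apply: (hub_del_leaf YWu lY eul) => [t tW elt|]; first exact/eqP/(implyP (l_leaf t tW)).
  apply: IHm; last exact: subset_trans (subD1set Y l) YWu.
  by rewrite -ltnS -(card_setD1_succ lY).
have leaf_is_leaf z : z \in W -> e u z -> z != p -> is_leaf z.
  move=> zW euz zp; rewrite /is_leaf euz; apply/forall_inP=> t tW.
  by apply/implyP=> ezt; rewrite (u_star zW euz zp tW ezt).
have vY : v \notin Y.
  apply: contraT => /negbNE /no_leaf; rewrite /is_leaf euv; case/forall_inPn=> t tW.
  by rewrite negb_imply => /andP[/(v_leaf tW)->]; rewrite eqxx.
have [/exists_inP[q qY euq]|/exists_inPn u_iso] := boolP [exists q in Y, e u q].
  apply: (hub_del_pivot YWu qY euq _ vY) => z zY euz.
  have nbr_p y : y \in Y -> e u y -> y = p.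
    move=> yY euy; apply/eqP; apply: contraNT (no_leaf y yY).
    exact: leaf_is_leaf (Y_W y yY) euy.
  by rewrite (nbr_p z zY euz) (nbr_p q qY euq).
exact: hub_del_free.
Qed.

End DeletedHub.

Lemma matching_cx_bounded k (W : T) :
  betti_bounded R (matching_cx k set0 W) #|W| (aim_in W k + k).
Proof.
move: {2}#|W| (leqnn #|W|) => m; elim: m k W => [|m IHm] k W cW.
  by move=> j _; move: cW; rewrite leqn0 => /eqP->.
have [->|/set0Pn[x xW]] := eqVneq W set0; first by move=> j _; rewrite cards0.
have [k0|k_gt0] := posnP k; first by rewrite k0; exact/betti_bounded_cone/matching_cx0_cone/xW.
have [/exists_inP[z zW /forall_inP z_iso]|/exists_inPn W_edges] :=
  boolP [exists z in W, [forall y in W, ~~ e z y]].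
  apply/(betti_bounded_cone (x := z))/matching_cx_cone => //; first by rewrite inE.
  by move=> y; rewrite setU0; apply: z_iso.
have [y yW exy] : exists2 y, y \in W & e x y.
  by have /forall_inPn[y yW /negbNE exy] := W_edges x xW; exists y.
have [v [u [rest [vur_path vur_longest]]]] := longest_upath_in xW yW exy.
have [_ /andP[vW /andP[uW _]] /andP[evu _]] := and3P vur_path.
have v_leaf := longest_upath_leaf vur_path vur_longest.
have u_star := longest_upath_star vur_path vur_longest.
have IH k' (W' : T) : (#|W'| < #|W|)%N ->
    betti_bounded R (matching_cx k' set0 W') #|W'| (aim_in W' k' + k').
  by move=> ltW; apply: IHm; rewrite -ltnS; apply: leq_trans ltW cW.
rewrite (card_setD1_succ uW).
apply: (betti_bounded_del_link (x := u) (td := aim_in W k + k - 1)) (leqnn _).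
- apply: eq_betti_bounded (matching_cx_del _ _ uW) _; rewrite setU0.
  have euv : e u v by rewrite e_sym.
  exact: (hub_del_bounded IH k_gt0 uW vW euv v_leaf u_star (subxx _)).
- apply: eq_betti_bounded (matching_cx_link _ _ uW) _.
  apply/(betti_bounded_cone (x := v))/matching_cx_cone.
  + by rewrite !inE vW andbT; apply: contraTneq evu => ->; rewrite e_irr.
  + by rewrite inE.
  + move=> t; rewrite setU0 => /setD1P[tu tW]; apply: contra tu => /(v_leaf _ tW)->.
    by rewrite eqxx.
- by rewrite subn1 prednK // addn_gt0 k_gt0 orbT.
Qed.

Lemma aim_in_le_aim W k : (aim_in W k <= aim e k)%N.
Proof.
apply/bigmax_leqP=> M /and3P[mM _ /existsP[P /and3P[pP gP cP]]].
apply: leq_bigmax_cond; apply/asboolP; split=> //; exists P; split=> //.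
- exact/gapsP.
- apply/andP; split.
    apply/allP=> c /mapP[B BP ->]; rewrite card_gt0.
    by apply: (partition_neq0 pP); rewrite -mem_enum.
  by rewrite size_map -cardE sumnE big_map big_enum /= -(card_partition pP).
- move=> B _ [s [us ss als cs]]; apply: G_forest; exists s; split=> //.
  by apply/allP=> z _; rewrite in_setT.
Qed.

End Forest.

End Matchings.

Lemma sum_ffun01 n (a : {ffun 'I_n -> nat}) : (forall v, a v <= 1)%N ->
  (\sum_v a v = #|[set v | (0 < a v)%N]|)%N.
Proof.
move=> a01; rewrite -sum1_card [RHS]big_mkcond /=; apply: eq_bigr => v _.
by rewrite inE; move: (a01 v); case: (a v) => [|[|]].
Qed.

Theorem theorem4p7 (R : fieldType) (n : nat) (e : rel 'I_n)
  (e_sym : symmetric e) (e_irr : irreflexive e) (G_forest : forest e)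
  (k : nat) (hk1 : (1 <= k)%N) (hk2 : (k <= mat e)%N) :
  reg_le e R k (aim e k + k).
Proof.
move=> i a; rewrite betti_koszul.
have [/existsP[v av]|/existsPn a01] := boolP [exists v, (1 < a v)%N].
  by rewrite (koszul_betti_cone R (kvalid_cone e k av)) eqxx.
have {}a01 v : (a v <= 1)%N by rewrite leqNgt a01.
rewrite (eq_koszul_betti R i (kvalid_matching_cx e k a01)) sum_ffun01 // => /matching_cx_bounded.
move=> /(_ e_sym e_irr G_forest) bound.
by apply: leq_trans bound _; rewrite leq_add2l leq_add2r aim_in_le_aim.
Qed.
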